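(* Let $f_1,\dots,f_k$ be nonnegative, monotonically nondecreasing convex functions, let $d_{ij}\ge 0$ for $i\in[n]$, $j\in[k]$, and let $\mathcal{P}\subseteq[0,1]^n$ be a polytope. Consider the integer program $$\min \sum_{j\in[k]} f_j\Big(\sum_{i\in[n]} d_{ij}y_i\Big)\quad\text{s.t. } y\in\mathcal{P},\ y\in\{0,1\}^n,$$ with optimal value $IP$, and the linear program (in variables $y\in\mathbb{R}^n$ and $z_{jS}$ for $j\in[k]$, $S\subseteq[n]$) $$\min \sum_{j\in[k]}\sum_{S\subseteq[n]} f_j\Big(\sum_{i\in S}d_{ij}\Big)z_{jS}$$ subject to $y\in\mathcal{P}$; $\sum_{S\subseteq[n]}z_{jS}=1$ for all $j\in[k]$; $\sum_{S: i\in S} z_{jS}=y_i$ for all $i\in[n]$, $j\in[k]$; $z_{jS}\ge 0$ for all $S,j$. Let $D_j=\{i: d_{ij}\ne 0\}$. Assume there is a randomized algorithm $R$ that, given $y\in\mathcal{P}$, returns a random point $R(y)\in\mathcal{P}\cap\{0,1\}^n$ such that (1) $\Pr(R_i(y)=1)=y_i$ for all $i$, where $R_i(y)$ is the $i$-th coordinate of $R(y)$; and (2) for every $j$, the random variables $\{R_i(y)\}_{i\in D_j}$ are independent or negatively associated. Then for every feasible solution $(y^*,z^* )$ of the linear program, $$\mathbb{E}\Big[\sum_{j\in[k]} f_j\Big(\sum_{i\in[n]} d_{ij}R_i(y^* )\Big)\Big]\le \sum_{j\in[k]} A(f_j)\sum_{S\subseteq[n]} f_j\Big(\sum_{i\in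 S}d_{ij}\Big)z^*_{jS}.$$ In particular, if $(y^*,z^* )$ is a $(1+\varepsilon)$-approximately optimal solution to the linear program, then $$\mathbb{E}\Big[\sum_{j\in[k]} f_j\Big(\sum_{i\in[n]} d_{ij}R_i(y^* )\Big)\Big]\le (1+\varepsilon)\max_j A(f_j)\cdot IP.$$
   Context: For a convex nondecreasing function $f$, $A(f)=\sup_{t>0}\mathbb{E}\big[f(tP)/f(t)\big]$, where $P$ is a Poisson random variable with parameter $1$; for $f(t)=ct^q$ one has $A(f)=A_q=\mathbb{E}[P^q]$. Random variables $X_1,\dots,X_m$ are negatively associated if for all disjoint $I,J\subseteq[m]$ and all nondecreasing functions $f:\mathbb{R}^I\to\mathbb{R}$, $g:\mathbb{R}^J\to\mathbb{R}$, $\mathbb{E}[f(X_i,i\in I)\,g(X_j,j\in J)]\le \mathbb{E}[f(X_i,i\in I)]\,\mathbb{E}[g(X_j,j\in J)]$. *)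

From HB Require Import structures.
From mathcomp Require Import all_boot all_order all_algebra.
From mathcomp Require Import all_classical all_reals all_analysis.
Set Implicit Arguments. Unset Strict Implicit. Unset Printing Implicit Defensive.
Import Order.TTheory GRing.Theory Num.Theory.
Local Open Scope classical_set_scope.
Local Open Scope ring_scope.

Section defs.
Variable R : realType.

Definition nonneg_nondec_convex (f : R -> R) : Prop :=
  (forall t, 0 <= t -> 0 <= f t) /\
  (forall s t, 0 <= s -> s <= t -> f s <= f t) /\
  (forall s t (l : R), 0 <= s -> 0 <= t -> 0 <= l -> l <= 1 ->
      f (l * s + (1 - l) * t) <= l * f s + (1 - l) * f t).

Definition Aconst (f : R -> R) : \bar R :=
  ereal_sup [set (\sum_(0 <= m <oo) (poisson_pmf 1 m * (f (t * m%:R) / f t))%:E)%E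
            | t in [set t : R | 0 < t]].

Definition polytope (n m : nat) (a : 'I_m -> 'I_n -> R) (b : 'I_m -> R)
  : set ('I_n -> R) :=
  [set y | forall l, \sum_(i < n) a l i * y i <= b l].

Definition ind (n : nat) (x : {ffun 'I_n -> bool}) : 'I_n -> R :=
  fun i => (x i)%:R.

Definition is_pmf (n : nat) (mu : {ffun 'I_n -> bool} -> R) : Prop :=
  (forall x, 0 <= mu x) /\ \sum_x mu x = 1.

Definition Ex (n : nat) (mu : {ffun 'I_n -> bool} -> R)
  (g : ('I_n -> R) -> R) : R :=
  \sum_x mu x * g (ind x).

Definition prob1 (n : nat) (mu : {ffun 'I_n -> bool} -> R) (i : 'I_n) : R :=
  \sum_(x : {ffun 'I_n -> bool} | x i) mu x.

Definition indep_on (n : nat) (mu : {ffun 'I_n -> bool} -> R)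
  (D : {set 'I_n}) : Prop :=
  forall a : 'I_n -> bool,
    \sum_(x : {ffun 'I_n -> bool} | [forall i in D, x i == a i]) mu x =
    \prod_(i in D) \sum_(x : {ffun 'I_n -> bool} | x i == a i) mu x.

(* the coordinates {X_i}_{i in D} are negatively associated:
   a function g : R^n -> R that is nondecreasing w.r.t. the coordinates in I
   (i.e. u_i <= v_i for all i in I implies g u <= g v) is exactly a
   nondecreasing function of (X_i, i in I). *)
Definition nondec_on (n : nat) (I : {set 'I_n}) (g : ('I_n -> R) -> R) :=
  forall u v : 'I_n -> R, (forall i, i \in I -> u i <= v i) -> g u <= g v.

Definition neg_assoc_on (n : nat) (mu : {ffun 'I_n -> bool} -> R)
  (D : {set 'I_n}) : Prop :=
  forall I J : {set 'I_n}, I \subset D -> J \subset D -> I :&: J = finset.set0 ->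
  forall g h : ('I_n -> R) -> R, nondec_on I g -> nondec_on J h ->
    Ex mu (fun u => g u * h u) <= Ex mu g * Ex mu h.

Definition ip_obj (n k : nat) (f : 'I_k -> R -> R) (d : 'I_n -> 'I_k -> R)
  (y : 'I_n -> R) : R :=
  \sum_(j < k) f j (\sum_(i < n) d i j * y i).

Definition lp_cost (n k : nat) (f : 'I_k -> R -> R) (d : 'I_n -> 'I_k -> R)
  (z : 'I_k -> {set 'I_n} -> R) (j : 'I_k) : R :=
  \sum_(S : {set 'I_n}) f j (\sum_(i in S) d i j) * z j S.

Definition lp_obj (n k : nat) (f : 'I_k -> R -> R) (d : 'I_n -> 'I_k -> R)
  (z : 'I_k -> {set 'I_n} -> R) : R :=
  \sum_(j < k) lp_cost f d z j.

Definition lp_feasible (n k : nat) (P : set ('I_n -> R))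
  (y : 'I_n -> R) (z : 'I_k -> {set 'I_n} -> R) : Prop :=
  P y /\
  (forall j, \sum_(S : {set 'I_n}) z j S = 1) /\
  (forall i j, \sum_(S : {set 'I_n} | i \in S) z j S = y i) /\
  (forall j S, 0 <= z j S).

(* optimal values (infima; +oo if infeasible) *)
Definition IPval (n k : nat) (P : set ('I_n -> R)) (f : 'I_k -> R -> R)
  (d : 'I_n -> 'I_k -> R) : \bar R :=
  ereal_inf [set (ip_obj f d (ind x))%:E | x in [set x | P (ind x)]].

Definition LPval (n k : nat) (P : set ('I_n -> R)) (f : 'I_k -> R -> R)
  (d : 'I_n -> 'I_k -> R) : \bar R :=
  ereal_inf [set (lp_obj f d yz.2)%:E
            | yz in [set yz : ('I_n -> R) * ('I_k -> {set 'I_n} -> R)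
                    | lp_feasible P yz.1 yz.2]].

End defs.

(* Per machine j, the rounded load sum_i d_ij R_i is first compared with the load of independent
   Bernoulli(y_i) jobs: negative association (or independence) lets the jobs be peeled off one at a
   time, since the increments of a convex f_j are nondecreasing.  Each Bernoulli(y_i), with
   y_i = sum_{S : i in S} z_jS, is then split into independent pieces, and the pieces belonging to a
   configuration S are merged into one Bernoulli(z_jS) of weight d_j(S); both moves only increase
   E[f_j].  Replacing these independent configuration choices by Poisson(z_jS) counts increases it
   again.  As sum_S z_jS = 1, the compound Poisson load is the total weight of Poisson(1)-many
   configurations drawn from z_j, so by Jensen its expected cost is at most
   sum_S z_jS E[f_j(d_j(S) P)] with P ~ Poisson(1), and E[f_j(d_j(S) P)] <= A(f_j) f_j(d_j(S)). *)
From HB Require Import structures.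
From mathcomp Require Import all_boot all_order all_algebra.
From mathcomp Require Import all_classical all_reals all_analysis.
From mathcomp Require Import ring lra.
Import Order.TTheory GRing.Theory Num.Theory.
Local Open Scope classical_set_scope.
Local Open Scope ring_scope.
Set Implicit Arguments. Unset Strict Implicit. Unset Printing Implicit Defensive.

Section IndependentBernoulli.
Variable R : realType.
Implicit Types (G H : R -> R) (a c e p q z : R) (l : seq (R * R)).

(* [Ebern G l a] is E[G (a + \sum_k c_k B_k)] for independent B_k ~ Bernoulli(p_k),
   where l = [:: (p_1, c_1); ...]. *)
Fixpoint Ebern G l a : R :=
  if l is pc :: l' then (1 - pc.1) * Ebern G l' a + pc.1 * Ebern G l' (a + pc.2)
  else G a.

Definition bern_term (pc : R * R) : bool := (0 <= pc.1 <= 1) && (0 <= pc.2).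

Definition incr_convex G : Prop :=
  forall a c e, 0 <= a -> 0 <= c -> 0 <= e ->
  G (a + c) + G (a + e) <= G a + G (a + c + e).

Definition convex_nonneg G : Prop :=
  forall s t x, 0 <= s -> 0 <= t -> 0 <= x -> x <= 1 ->
  G (x * s + (1 - x) * t) <= x * G s + (1 - x) * G t.

(* a + c and a + e are convex combinations of a and a + c + e with complementary weights. *)
Lemma convex_incr_convex G : convex_nonneg G -> incr_convex G.
Proof.
move=> Gc a c e a0 c0 e0.
have [ce0|ce0] := eqVneq (c + e) 0.
  have [-> ->] : c = 0 /\ e = 0 by split; lra.
  by rewrite !addr0.
have cep : 0 < c + e by rewrite lt_def ce0 addr_ge0.
set x := e / (c + e).
have x0 : 0 <= x by rewrite divr_ge0 // ltW.
have x1 : x <= 1 by rewrite ler_pdivrMr // mul1r; lra.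
have ace0 : 0 <= a + c + e by rewrite !addr_ge0.
have Ec : a + c = x * a + (1 - x) * (a + c + e) by rewrite /x; field; rewrite ce0.
have Ee : a + e = (1 - x) * a + (1 - (1 - x)) * (a + c + e) by rewrite /x; field; rewrite ce0.
have h1 := Gc a (a + c + e) x a0 ace0 x0 x1.
have h2 := Gc a (a + c + e) (1 - x) a0 ace0 ltac:(lra) ltac:(lra).
set t := a + c + e in ace0 Ec Ee h1 h2 *.
rewrite Ec Ee; lra.
Qed.

Lemma bern_termP p c : reflect [/\ 0 <= p, p <= 1 & 0 <= c] (bern_term (p, c)).
Proof. by rewrite /bern_term /=; apply: (iffP idP) => [/andP[/andP[]]|[-> -> ->]]. Qed.

Lemma all_bern_term_map (T : Type) (s : seq T) (h : T -> R * R) :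
  (forall i, bern_term (h i)) -> all bern_term [seq h i | i <- s].
Proof. by move=> H; elim: s => //= i s ->; rewrite H. Qed.

Lemma Ebern_cat G l1 l2 a : Ebern G (l1 ++ l2) a = Ebern (Ebern G l2) l1 a.
Proof. by elim: l1 a => [|[p c] l1 IH] a //=; rewrite !IH. Qed.

Lemma ler_Ebern G H l a : all bern_term l -> 0 <= a ->
  (forall b, 0 <= b -> G b <= H b) -> Ebern G l a <= Ebern H l a.
Proof.
elim: l a => [|[p c] l IH] a /=; first by move=> _ a0 GH; exact: GH.
case/andP=> /bern_termP[p0 p1 c0] okl a0 GH.
have q0 : 0 <= 1 - p by lra.
by rewrite lerD // ler_wpM2l // IH // addr_ge0.
Qed.

Lemma incr_convex_shift G c : 0 <= c -> incr_convex G -> incr_convex (fun b => G (b + c)).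
Proof.
move=> c0 HG a c' e a0 c'0 e0 /=.
have := HG (a + c) c' e (addr_ge0 a0 c0) c'0 e0.
by rewrite !(addrAC _ c).
Qed.

Lemma incr_convex_Ebern G l : all bern_term l -> incr_convex G -> incr_convex (Ebern G l).
Proof.
elim: l G => [|[p c] l IH] G //= /andP[/bern_termP[p0 p1 c0] okl] HG.
move=> a c' e a0 c'0 e0.
have h1 := IH G okl HG a c' e a0 c'0 e0.
have h2 := incr_convex_shift c0 (IH G okl HG) a0 c'0 e0; rewrite /= in h2.
have q0 : 0 <= 1 - p by lra.
nra.
Qed.

Lemma Ebern_swap G x y l a : Ebern G (x :: y :: l) a = Ebern G (y :: x :: l) a.
Proof. by case: x y => p c [q d] /=; rewrite (addrAC a d c); ring. Qed.

Lemma Ebern_insert G x l1 l2 a : Ebern G (x :: l1 ++ l2) a = Ebern G (l1 ++ x :: l2) a.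
Proof.
elim: l1 a => [|y l1 IH] a //.
by rewrite Ebern_swap [in RHS]/= -!IH.
Qed.

Lemma Ebern_interleave (T : Type) G (u v : T -> R * R) (s : seq T) a :
  Ebern G (flatten [seq [:: u i; v i] | i <- s]) a =
  Ebern G ([seq u i | i <- s] ++ [seq v i | i <- s]) a.
Proof. by elim: s a => [|i s IH] a //=; rewrite -!Ebern_insert /= !IH. Qed.

(* Splitting B ~ Bernoulli(p + q) into independent Bernoulli(p) and Bernoulli(q) with the same
   weight can only increase the expectation: the split sum is a mean-preserving spread. *)
Lemma Ebern_split G p q c l a : 0 <= p -> 0 <= q -> 0 <= c -> 0 <= a ->
  incr_convex (Ebern G l) ->
  Ebern G ((p + q, c) :: l) a <= Ebern G ((p, c) :: (q, c) :: l) a.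
Proof.
move=> p0 q0 c0 a0 H /=.
have := H a c c a0 c0 c0.
have := mulr_ge0 p0 q0.
nra.
Qed.

Lemma Ebern_split_seq (T : Type) G (p q c : T -> R) (s : seq T) a :
  incr_convex G -> (forall i, 0 <= p i) -> (forall i, 0 <= q i) ->
  (forall i, p i + q i <= 1) -> (forall i, 0 <= c i) -> 0 <= a ->
  Ebern G [seq (p i + q i, c i) | i <- s] a <=
  Ebern G (flatten [seq [:: (p i, c i); (q i, c i)] | i <- s]) a.
Proof.
move=> HG p0 q0 pq1 c0.
have pq_ok i : bern_term (p i, c i) && bern_term (q i, c i).
  have := pq1 i; have := p0 i; have := q0 i => qi0 pi0 pq.
  by apply/andP; split; apply/bern_termP; split; rewrite ?c0 //; lra.
have sum_ok s' : all bern_term [seq (p i + q i, c i) | i <- s'].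
  by apply: all_bern_term_map => i; rewrite /bern_term /= c0 pq1 addr_ge0.
elim: s a => [|i s IH] a a0 //=.
apply: le_trans (Ebern_split (p0 i) (q0 i) (c0 i) a0 (incr_convex_Ebern (sum_ok s) HG)) _.
have /andP[pi_ok qi_ok] := pq_ok i.
by apply: (ler_Ebern (l := [:: (p i, c i); (q i, c i)])) => //=; rewrite pi_ok qi_ok.
Qed.

(* Merging the Bernoulli(z) variables of the items in P into one Bernoulli(z) carrying their
   total weight is again a mean-preserving spread. *)
Lemma Ebern_merge (T : Type) G (P : pred T) z (c : T -> R) (s : seq T) a :
  incr_convex G -> 0 <= z <= 1 -> (forall i, 0 <= c i) -> 0 <= a ->
  Ebern G [seq (if P i then z else 0, c i) | i <- s] a <=
  (1 - z) * G a + z * G (a + \sum_(i <- s | P i) c i).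
Proof.
move=> HG /andP[z0 z1] c0.
elim: s a => [|i s IH] a a0 /=; first by rewrite big_nil addr0; lra.
rewrite big_cons; case: (P i) => /=; last by rewrite subr0 mul1r mul0r addr0 IH.
have h1 := IH a a0.
have h2 := IH (a + c i) (addr_ge0 a0 (c0 i)).
have h3 := HG a (c i) (\sum_(j <- s | P j) c j) a0 (c0 i) (sumr_ge0 _ (fun j _ => c0 j)).
rewrite addrA.
have q0 : 0 <= 1 - z by lra.
have := mulr_ge0 z0 q0.
nra.
Qed.

Section Configurations.
Variables (T : finType) (G : R -> R) (z : {set T} -> R) (c : T -> R).
Hypotheses (G_ic : incr_convex G) (z01 : forall X, 0 <= z X <= 1) (c0 : forall i, 0 <= c i).

Let cover (ss : seq {set T}) i := \sum_(X <- ss) (if i \in X then z X else 0).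

Let cover_ge0 ss i : 0 <= cover ss i.
Proof. by apply: sumr_ge0 => X _; case: ifP => // _; case/andP: (z01 X). Qed.

(* Item i, present with probability cover ss i, is dominated by drawing each configuration X
   independently with probability z X and paying the total weight of its items. *)
Lemma Ebern_items_le_configs (items : seq T) (ss : seq {set T}) a :
  0 <= a -> (forall i, cover ss i <= 1) ->
  Ebern G [seq (cover ss i, c i) | i <- items] a <=
  Ebern G [seq (z X, \sum_(i <- items | i \in X) c i) | X <- ss] a.
Proof.
elim: ss a => [|X ss IH] a a0 cov1 /=.
  rewrite /cover; under eq_map do rewrite big_nil.
  by elim: items a a0 {cov1} => [|i s IHs] a a0 //=; rewrite subr0 mul1r mul0r addr0 IHs.
set p := fun i => if i \in X then z X else 0.
have p0 i : 0 <= p i by rewrite /p; case: ifP => // _; case/andP: (z01 X).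
have pq1 i : p i + cover ss i <= 1 by have := cov1 i; rewrite /cover big_cons.
have cov1' i : cover ss i <= 1 by have := pq1 i; have := p0 i; lra.
have -> : [seq (cover (X :: ss) i, c i) | i <- items] =
    [seq (p i + cover ss i, c i) | i <- items].
  by apply: eq_map => i; rewrite /cover big_cons.
apply: le_trans (Ebern_split_seq items G_ic p0 (cover_ge0 ss) pq1 c0 a0) _.
rewrite Ebern_interleave Ebern_cat.
have rest_ok : all bern_term [seq (cover ss i, c i) | i <- items].
  by apply: all_bern_term_map => i; rewrite /bern_term /= c0 cover_ge0 cov1'.
apply: le_trans (Ebern_merge (mem X) items (incr_convex_Ebern rest_ok G_ic) (z01 X) c0 a0) _.
case/andP: (z01 X) => zX0 zX1; have zX0' : 0 <= 1 - z X by lra.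
rewrite /= lerD ?ler_wpM2l ?IH //.
by rewrite addr_ge0 // sumr_ge0.
Qed.

End Configurations.

End IndependentBernoulli.
Arguments bern_term {R}.

Section PoissonMass.
Variable R : realType.
Implicit Types (w : R) (H : nat -> R).
Local Open Scope ereal_scope.

(* The library's [poisson_pmf 0] is the constant 1, so rate 0 needs its own mass function. *)
Definition poisson_mass w (j : nat) : R := (w ^+ j / j`!%:R * expR (- w))%R.

Lemma poisson_pmf1E (j : nat) : poisson_pmf 1 j = poisson_mass (1 : R) j.
Proof. by rewrite /poisson_pmf ltr01. Qed.

Lemma poisson_mass_ge0 w j : (0 <= w)%R -> (0 <= poisson_mass w j)%R.
Proof. by move=> w0; rewrite /poisson_mass !mulr_ge0 ?invr_ge0 ?exprn_ge0 ?expR_ge0. Qed.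

Lemma exp_nneseries w : (0 <= w)%R -> \sum_(j <oo) ((w ^+ j / j`!%:R)%:E) = (expR w)%:E.
Proof.
move=> w0; rewrite expRE -EFin_lim; last first.
  by rewrite /pseries/=; under eq_fun do rewrite mulrC; exact: is_cvg_series_exp_coeff.
apply/congr_lim/funext => n /=; rewrite /pseries /series /= -sumEFin.
by under eq_bigr do rewrite mulrC.
Qed.

Lemma poisson_mass_sum w : (0 <= w)%R -> \sum_(j <oo) (poisson_mass w j)%:E = 1.
Proof.
move=> w0; under eq_eseriesr do rewrite /poisson_mass EFinM muleC.
rewrite nneseriesZl; last by move=> i _; rewrite lee_fin divr_ge0 ?exprn_ge0.
by rewrite exp_nneseries // -EFinM -expRD addNr expR0.
Qed.

Lemma poisson_mass_mean w : (0 <= w)%R -> \sum_(j <oo) (j%:R * poisson_mass w j)%:E = w%:E.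
Proof.
move=> w0; have pw0 j : 0 <= (j%:R * poisson_mass w j)%:E.
  by rewrite lee_fin mulr_ge0 ?poisson_mass_ge0.
rewrite nneseries_recl // mul0r add0e -nneseries_addn //.
transitivity (\sum_(i <oo) (w%:E * (poisson_mass w i)%:E)).
  apply: eq_eseriesr => i _; rewrite -EFinM; congr (_%:E).
  have i1 : ((i.+1)%:R != 0 :> R)%R by rewrite pnatr_eq0.
  have fi : ((i`!)%:R != 0 :> R)%R by rewrite pnatr_eq0 -lt0n fact_gt0.
  rewrite /poisson_mass addn1 factS exprS natrM invfM.
  by field; rewrite fi nat1r i1.
by rewrite nneseriesZl ?poisson_mass_sum ?mule1 // => i _; rewrite lee_fin poisson_mass_ge0.
Qed.

(* A function whose increments dominate its first increment lies above its chord through 0 and 1,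
   so replacing Bernoulli(w) by Poisson(w) (same mean) can only increase its expectation. *)
Lemma bernoulli_le_poisson w H : (0 <= w)%R ->
  (forall j, 0 <= H j)%R -> (H 0 <= H 1)%R ->
  (forall j, H 1 - H 0 <= H j.+1 - H j)%R ->
  ((1 - w) * H 0 + w * H 1)%:E <= \sum_(j <oo) (poisson_mass w j * H j)%:E.
Proof.
move=> w0 H0 H01 Hinc.
have chord j : (H 0 + j%:R * (H 1 - H 0) <= H j)%R.
  elim: j => [|j IH]; first by rewrite mul0r addr0.
  by have := Hinc j; rewrite -addn1 natrD mulrDl mul1r; lra.
have pm0 := poisson_mass_ge0 _ w0.
have d0 : (0 <= H 1 - H 0)%R by rewrite subr_ge0.
have jpm0 j : (0 <= j%:R * poisson_mass w j)%R by rewrite mulr_ge0.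
have mean : \sum_(j <oo) ((poisson_mass w j * H 0)%:E
      + (j%:R * poisson_mass w j)%:E * (H 1 - H 0)%:E) = ((1 - w) * H 0 + w * H 1)%:E.
  rewrite (_ : (1 - w) * H 0 + w * H 1 = H 0 + (H 1 - H 0) * w)%R; last by ring.
  rewrite nneseriesD; first last.
  - by move=> i _ _; rewrite -EFinM lee_fin mulr_ge0.
  - by move=> i _ _; rewrite lee_fin mulr_ge0.
  under eq_eseriesr do rewrite EFinM muleC.
  rewrite nneseriesZl; last by move=> i _; rewrite lee_fin.
  under [X in _ + X]eq_eseriesr do rewrite muleC.
  rewrite nneseriesZl; last by move=> i _; rewrite lee_fin.
  by rewrite poisson_mass_sum // poisson_mass_mean // mule1 -!EFinM -EFinD.
rewrite -mean; apply: lee_nneseries.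
  by move=> i _ _; rewrite -EFinM -EFinD lee_fin addr_ge0 // mulr_ge0.
move=> j _; rewrite -EFinM -EFinD lee_fin.
rewrite (_ : _ + _ = poisson_mass w j * (H 0 + j%:R * (H 1 - H 0)))%R; last by ring.
exact: ler_wpM2l.
Qed.

End PoissonMass.

Lemma nneseries_cauchy (R : realType) (u : nat -> nat -> \bar R) :
  (forall i j, (0 <= u i j)%E) ->
  (\sum_(m <oo) \sum_(0 <= j < m.+1) u j (m - j)%N = \sum_(j <oo) \sum_(r <oo) u j r)%E.
Proof.
move=> u0; set v := fun m j => if (j <= m)%N then u j (m - j)%N else 0%E.
have v0 m j : (0 <= v m j)%E by rewrite /v; case: ifP.
have diag m : (\sum_(0 <= j < m.+1) u j (m - j)%N = \sum_(j <oo) v m j)%E.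
  rewrite [RHS](@nneseries_split _ _ 0 m.+1) // add0n eseries0 ?adde0; last first.
    by move=> i /= mi _; rewrite /v leqNgt mi.
  by apply: eq_big_nat => j; rewrite ltnS /v => /andP[_ ->].
rewrite (eq_eseriesr (fun m _ => diag m)).
rewrite nneseries_interchange //; apply: eq_eseriesr => j _.
rewrite (@nneseries_split _ _ 0 j) // add0n big1_seq ?add0e; last first.
  by move=> i /andP[_]; rewrite mem_index_iota /v => /andP[_ ij]; rewrite leqNgt ij.
rewrite -nneseries_addn //; apply: eq_eseriesr => i _.
by rewrite /v leq_addl addnK.
Qed.

Section CompoundPoisson.
Variable R : realType.
Implicit Types (G : R -> R) (a c w : R) (l : seq (R * R)).

(* For l = [:: (p_1, c_1); ...], [draws G l m a] sums
   p_{k_1} * ... * p_{k_m} * G (a + c_{k_1} + ... + c_{k_m}) over all m-tuples of indices;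
   weighted by [poisson_weight l m], the sum over m is
   E[G (a + \sum_k c_k N_k)] for independent N_k ~ Poisson(p_k). *)
Fixpoint draws G l (m : nat) a : R :=
  if m is m'.+1 then \sum_(pc <- l) pc.1 * draws G l m' (a + pc.2) else G a.

Definition rate l : R := \sum_(pc <- l) pc.1.

Definition poisson_weight l (m : nat) : R := expR (- rate l) / m`!%:R.

Definition Ecpoisson G l a : \bar R :=
  (\sum_(m <oo) (poisson_weight l m * draws G l m a)%:E)%E.

Lemma poisson_weight_ge0 l m : 0 <= poisson_weight l m.
Proof. by rewrite /poisson_weight divr_ge0 ?expR_ge0. Qed.

Lemma draws_cons_binom G w c l m a :
  draws G ((w, c) :: l) m a =
  \sum_(0 <= j < m.+1) ('C(m, j)%:R * w ^+ j * draws G l (m - j) (a + j%:R * c)).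
Proof.
elim: m a => [|m IH] a; first by rewrite big_nat1 /= bin0 mul0r addr0 !mul1r.
rewrite [LHS]/= big_cons /= IH.
under eq_bigr do rewrite IH.
have first_draw_in_l : \sum_(pc <- l) pc.1 * \sum_(0 <= j < m.+1)
      ('C(m, j)%:R * w ^+ j * draws G l (m - j) (a + pc.2 + j%:R * c)) =
    \sum_(0 <= j < m.+1) ('C(m, j)%:R * w ^+ j * draws G l (m - j).+1 (a + j%:R * c)).
  under eq_bigr do rewrite big_distrr.
  rewrite exchange_big /=; apply: eq_bigr => j _ /=.
  by rewrite big_distrr /=; apply: eq_bigr => -[p d] _ /=; rewrite (addrAC a d); ring.
rewrite first_draw_in_l big_distrr /=.
set A := \sum_(0 <= j < m.+1) _.
set B := \sum_(0 <= j < m.+1) _.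
set C := \sum_(0 <= j < m) ('C(m, j.+1)%:R * w ^+ j.+1 * draws G l (m - j) (a + j.+1%:R * c)).
have -> : B = draws G l m.+1 a + C.
  rewrite /B big_nat_recl // bin0 expr0 mul0r addr0 !mul1r subn0; congr (_ + _).
  by apply: eq_big_nat => j /andP[_ jm]; rewrite -(subnSK jm).
have -> : \sum_(0 <= j < m.+2) ('C(m.+1, j)%:R * w ^+ j * draws G l (m.+1 - j) (a + j%:R * c))
    = draws G l m.+1 a + (C + A).
  rewrite big_nat_recl // bin0 expr0 mul0r addr0 !mul1r subn0; congr (_ + _).
  under eq_bigr do rewrite binS natrD !mulrDl.
  rewrite big_split /=; congr (_ + _).
    by rewrite big_nat_recr //= bin_small // !mul0r addr0.
  apply: eq_bigr => j _; rewrite subSS exprS -[(j.+1)%:R]natr1.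
  by rewrite (_ : a + (j%:R + 1) * c = a + c + j%:R * c); [ring | ring].
ring.
Qed.

Section CostFunction.
Variable G : R -> R.
Hypotheses (G0 : forall t, 0 <= t -> 0 <= G t)
  (G_nondec : forall s t, 0 <= s -> s <= t -> G s <= G t) (G_ic : incr_convex G).

Lemma draws_ge0 l m a : all bern_term l -> 0 <= a -> 0 <= draws G l m a.
Proof.
move=> okl; elim: m a => [|m IH] a a0 /=; first exact: G0.
rewrite big_seq; apply: sumr_ge0 => -[p c] /(allP okl) /bern_termP[p0 _ c0] /=.
by rewrite mulr_ge0 // IH // addr_ge0.
Qed.

Lemma ler_draws l m a b : all bern_term l -> 0 <= a -> a <= b ->
  draws G l m a <= draws G l m b.
Proof.
move=> okl; elim: m a b => [|m IH] a b a0 ab /=; first exact: G_nondec.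
rewrite !big_seq; apply: ler_sum => -[p c] /(allP okl) /bern_termP[p0 _ c0] /=.
by rewrite ler_wpM2l // IH ?addr_ge0 // lerD2r.
Qed.

Lemma incr_convex_draws l m : all bern_term l -> incr_convex (draws G l m).
Proof.
move=> okl; elim: m => [|m IH] //= a c e a0 c0 e0.
rewrite !big_seq -!big_split /=; apply: ler_sum => -[p d] /(allP okl) /bern_termP[p0 _ d0] /=.
rewrite -!mulrDr ler_wpM2l //.
exact: (incr_convex_shift d0 IH a0 c0 e0).
Qed.

Lemma Ecpoisson_cons w c l a : 0 <= w -> 0 <= c -> all bern_term l -> 0 <= a ->
  Ecpoisson G ((w, c) :: l) a =
  (\sum_(j <oo) \sum_(r <oo)
     (poisson_mass w j * (poisson_weight l r * draws G l r (a + j%:R * c)))%:E)%E.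
Proof.
move=> w0 c0 okl a0.
rewrite /Ecpoisson -nneseries_cauchy; last first.
  move=> i j; rewrite lee_fin mulr_ge0 ?poisson_mass_ge0 // mulr_ge0 ?poisson_weight_ge0 //.
  by rewrite draws_ge0 // addr_ge0 // mulr_ge0.
apply: eq_eseriesr => m _.
rewrite draws_cons_binom big_distrr /= -sumEFin.
apply: eq_big_nat => j /andP[_]; rewrite ltnS => jm; congr (_%:E).
rewrite /poisson_weight /poisson_mass /rate big_cons /= opprD expRD.
have binj : ('C(m, j)%:R : R) != 0 by rewrite pnatr_eq0 -lt0n bin_gt0.
have fj : (j`!%:R : R) != 0 by rewrite pnatr_eq0 -lt0n fact_gt0.
have fmj : ((m - j)`!%:R : R) != 0 by rewrite pnatr_eq0 -lt0n fact_gt0.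
by rewrite -(bin_fact jm) !natrM; field; rewrite binj fj fmj.
Qed.

(* Induction on l: the head Bernoulli(w) is replaced by Poisson(w) via [bernoulli_le_poisson],
   applied to the (increment-convex) conditional expectation given the other draws. *)
Lemma Ebern_le_Ecpoisson l a : all bern_term l -> 0 <= a ->
  ((Ebern G l a)%:E <= Ecpoisson G l a)%E.
Proof.
elim: l a => [|[w c] l IH] a.
  move=> _ a0; rewrite /Ecpoisson nneseries_recl //; last first.
    by move=> k _; rewrite lee_fin mulr_ge0 ?poisson_weight_ge0 ?draws_ge0.
  rewrite eseries0 ?adde0; last by move=> [|k] //= _ _; rewrite big_nil mulr0.
  by rewrite /poisson_weight /rate big_nil oppr0 expR0 /= divr1 mul1r.
case/andP=> /bern_termP[w0 w1 c0] okl a0.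
rewrite Ecpoisson_cons //.
set H := fun r (j : nat) => poisson_weight l r * draws G l r (a + j%:R * c).
have H0 r j : 0 <= H r j.
  by rewrite /H mulr_ge0 ?poisson_weight_ge0 // draws_ge0 // addr_ge0 // mulr_ge0.
rewrite (@nneseries_interchange _ (fun j r => (poisson_mass w j * H r j)%:E)); last first.
  by move=> i j; rewrite lee_fin mulr_ge0 ?poisson_mass_ge0.
apply: (@le_trans _ _ (\sum_(r <oo) ((1 - w) * H r 0 + w * H r 1)%:E)%E); last first.
  apply: lee_nneseries => [r _ _|r _].
    by rewrite lee_fin addr_ge0 // mulr_ge0 // subr_ge0.
  apply: bernoulli_le_poisson => // [|j].
    by rewrite /H ler_wpM2l ?poisson_weight_ge0 // ler_draws // ?mul0r ?addr0 // mul1r lerDl.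
  rewrite /H -!mulrBr ler_wpM2l ?poisson_weight_ge0 //.
  have := incr_convex_draws r okl a0 c0 (mulr_ge0 (ler0n _ j) c0).
  rewrite mul0r addr0 mul1r -[(j.+1)%:R]natr1.
  rewrite (_ : a + (j%:R + 1) * c = a + c + j%:R * c); last by ring.
  lra.
under eq_eseriesr do rewrite EFinD (EFinM (1 - w)) (EFinM w).
rewrite nneseriesD => [|r _ _|r _ _]; last 2 first.
- by rewrite mule_ge0 // lee_fin ?subr_ge0.
- by rewrite mule_ge0 // lee_fin.
rewrite !nneseriesZl => [|r _|r _]; last 2 first.
- by rewrite lee_fin.
- by rewrite lee_fin.
rewrite /= EFinD !EFinM leeD // lee_wpmul2l ?lee_fin ?subr_ge0 //.
- by rewrite /H; under eq_eseriesr do rewrite mul0r addr0; exact: IH.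
- by rewrite /H; under eq_eseriesr do rewrite mul1r; apply: IH; rewrite // addr_ge0.
Qed.

End CostFunction.

(* Jensen for the empirical mean of m draws from the probability vector (p_k): conditioning on
   the first draw and using convexity at the weights 1/(m+1), m/(m+1). *)
Lemma draws_le_convex G l m a : convex_nonneg G -> all bern_term l -> rate l = 1 -> 0 <= a ->
  draws G l m a <= \sum_(pc <- l) pc.1 * G (a + m%:R * pc.2).
Proof.
move=> Gc okl l1; elim: m a => [|m IH] a a0 /=.
  by under eq_bigr do rewrite mul0r addr0; rewrite -big_distrl /= -/(rate l) l1 mul1r.
have okpc pc : pc \in l -> 0 <= pc.1 /\ 0 <= pc.2.
  by case: pc => p c /(allP okl) /bern_termP[].
set x := (m.+1%:R : R)^-1.
have m1 : (m.+1%:R : R) != 0 by rewrite pnatr_eq0.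
have x0 : 0 <= x by rewrite invr_ge0.
have x1 : x <= 1 by rewrite invf_le1 // ?ler1n // ltr0n.
set X := fun pc : R * R => G (a + m.+1%:R * pc.2).
set M := \sum_(pc <- l) pc.1 * X pc.
apply: (@le_trans _ _
    (\sum_(pc <- l) pc.1 * \sum_(pc' <- l) pc'.1 * (x * X pc + (1 - x) * X pc'))).
  rewrite !big_seq; apply: ler_sum => pc /okpc[p0 c0].
  apply: ler_wpM2l => //; apply: le_trans (IH _ (addr_ge0 a0 c0)) _.
  rewrite !big_seq; apply: ler_sum => pc' /okpc[p0' c0'].
  apply: ler_wpM2l => //; rewrite /X.
  rewrite (_ : a + pc.2 + m%:R * pc'.2 =
      x * (a + m.+1%:R * pc.2) + (1 - x) * (a + m.+1%:R * pc'.2)); last first.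
    by rewrite /x -natr1; field; rewrite natr1.
  by apply: Gc => //; rewrite addr_ge0 // mulr_ge0.
have inner pc : \sum_(pc' <- l) pc'.1 * (x * X pc + (1 - x) * X pc') = x * X pc + (1 - x) * M.
  rewrite (eq_bigr (fun pc' => x * X pc * pc'.1 + (1 - x) * (pc'.1 * X pc'))); last first.
    by move=> *; ring.
  by rewrite big_split /= -!big_distrr /= -/(rate l) l1 mulr1.
under eq_bigr do rewrite inner.
rewrite (eq_bigr (fun pc => x * (pc.1 * X pc) + (1 - x) * M * pc.1)); last by move=> *; ring.
rewrite big_split /= -!big_distrr /= -/(rate l) l1 mulr1 -/M.
by rewrite -mulrDl addrC subrK mul1r.
Qed.

End CompoundPoisson.

Section Dependence.
Variables (R : realType) (n : nat).
Notation cube := {ffun 'I_n -> bool}.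
Implicit Types (mu : cube -> R) (D I J : {set 'I_n}) (x b : cube).

Definition restr D x : cube := [ffun l => (l \in D) && x l].

Lemma agree_restrE D x b :
  (b == restr D b) && [forall l in D, x l == b l] = (b == restr D x).
Proof.
apply/andP/eqP => [[/eqP bE /forall_inP xb]|->].
  apply/ffunP => l; rewrite bE !ffunE.
  by case: (boolP (l \in D)) => // /xb /eqP ->.
split; first by apply/eqP/ffunP => l; rewrite !ffunE andbA andbb.
by apply/forall_inP => l lD; rewrite ffunE lD.
Qed.

Lemma sum_restr mu D (phi : cube -> R) : (forall x, phi x = phi (restr D x)) ->
  \sum_x mu x * phi x =
  \sum_(b : cube | b == restr D b) phi b * \sum_(x : cube | [forall l in D, x l == b l]) mu x.
Proof.
move=> phiD; under [RHS]eq_bigr do rewrite big_distrr.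
rewrite (exchange_big_dep xpredT) //=; apply: eq_bigr => x _.
rewrite (eq_bigl (fun b => b == restr D x)) => [|b]; last by rewrite agree_restrE.
by rewrite big_pred1_eq mulrC -phiD.
Qed.

Definition flip (i : 'I_n) b : cube := [ffun l => if l == i then ~~ b l else b l].

Lemma flipK i : involutive (flip i).
Proof. by move=> b; apply/ffunP => l; rewrite !ffunE; case: eqP => // _; rewrite negbK. Qed.

(* Conditioned on the other coordinates of D, X_i is still Bernoulli(Pr(X_i = 1));
   flipping coordinate i matches the patterns with b i = true against those with b i = false. *)
Lemma indep_Ex_coord_mul mu D i (h : cube -> R) :
  is_pmf mu -> indep_on mu D -> i \in D ->
  (forall b b', (forall l, l \in D -> l != i -> b l = b' l) -> h b = h b') ->
  \sum_x mu x * ((x i)%:R * h x) = prob1 mu i * \sum_x mu x * h x.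
Proof.
move=> [mu0 mu1] indD iD hD.
have h_restr x : h x = h (restr D x) by apply: hD => l lD _; rewrite ffunE lD.
set q := fun l (be : bool) => \sum_(x : cube | x l == be) mu x.
have marg b : \sum_(x : cube | [forall l in D, x l == b l]) mu x =
    q i (b i) * \prod_(l in D | l != i) q l (b l) by rewrite indD (bigD1 i).
rewrite (@sum_restr mu D (fun x => (x i)%:R * h x)) => [|x]; last by rewrite -h_restr ffunE iD.
rewrite (@sum_restr mu D h) //.
set P := fun b => b == restr D b.
set W := fun b => h b * \prod_(l in D | l != i) q l (b l).
have -> : \sum_(b : cube | P b) (b i)%:R * h b * \sum_(x : cube | [forall l in D, x l == b l]) mu x
    = q i true * \sum_(b : cube | P b) (b i)%:R * W b.
  by rewrite big_distrr; apply: eq_bigr => b _; rewrite marg /W; case: (b i) => /=; ring.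
have -> : \sum_(b : cube | P b) h b * \sum_(x : cube | [forall l in D, x l == b l]) mu x
    = q i true * \sum_(b : cube | P b) (b i)%:R * W b
      + q i false * \sum_(b : cube | P b) (~~ b i)%:R * W b.
  rewrite !big_distrr -big_split; apply: eq_bigr => b _.
  by rewrite marg /W; case: (b i) => /=; ring.
have -> : \sum_(b : cube | P b) (~~ b i)%:R * W b = \sum_(b : cube | P b) (b i)%:R * W b.
  rewrite (reindex_inj (inv_inj (flipK i))) /=; apply: eq_big => b.
    rewrite /P; apply/eqP/eqP => /ffunP E; apply/ffunP => l; move: (E l);
      by rewrite !ffunE; case: (l =P i) => [->|_]; rewrite ?iD.
  move=> _; rewrite ffunE eqxx negbK /W; congr (_ * (_ * _)).
    by apply: hD => l _ li; rewrite ffunE (negbTE li).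
  by apply: eq_bigr => l /andP[_ li]; rewrite ffunE (negbTE li).
have qi1 : q i true + q i false = 1.
  rewrite -mu1 (bigID (fun x => x i == true)) /=; congr (_ + _).
  by apply: eq_bigl => x; case: (x i).
have qi : q i true = prob1 mu i by apply: eq_bigl => x; case: (x i).
by rewrite -mulrDl qi1 mul1r qi.
Qed.

Definition coord_neg_correlated mu D (y : 'I_n -> R) :=
  forall i J (h : ('I_n -> R) -> R), i \in D -> J \subset D -> i \notin J -> nondec_on J h ->
  \sum_x mu x * ((x i)%:R * h (ind R x)) <= y i * \sum_x mu x * h (ind R x).

Lemma Ex_coord mu i : Ex mu (fun u => u i) = prob1 mu i.
Proof.
rewrite /Ex /prob1 [RHS]big_mkcond /=; apply: eq_bigr => x _.
by rewrite /ind; case: (x i); rewrite ?mulr1 ?mulr0.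
Qed.

Lemma neg_assoc_coord_neg_correlated mu D y :
  neg_assoc_on mu D -> (forall i, prob1 mu i = y i) -> coord_neg_correlated mu D y.
Proof.
move=> NA py i J h iD JD iJ hJ.
have iJ0 : [set i]%SET :&: J = finset.set0.
  by apply/setP => l; rewrite !inE; case: eqP => // ->; rewrite (negbTE iJ).
have coord_nondec : nondec_on [set i]%SET (fun u : 'I_n -> R => u i).
  by move=> u v uv; apply: uv; rewrite inE.
have := NA [set i]%SET J _ JD iJ0 _ _ coord_nondec hJ.
by rewrite finset.sub1set iD Ex_coord py => /(_ isT).
Qed.

Lemma indep_coord_neg_correlated mu D y : is_pmf mu -> indep_on mu D ->
  (forall i, prob1 mu i = y i) -> coord_neg_correlated mu D y.
Proof.
move=> pm indD py i J h iD JD iJ hJ.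
rewrite -py (indep_Ex_coord_mul (h := fun x => h (ind R x)) pm indD iD) //.
move=> b b' bb'; have agree l : l \in J -> ind R b l = ind R b' l.
  move=> lJ; rewrite /ind bb' // ?(fintype.subsetP JD) //.
  by apply: contraNneq iJ => <-.
by apply/le_anti/andP; split; apply: hJ => l /agree ->.
Qed.

Lemma nondec_on_increment (G : R -> R) I (V : ('I_n -> R) -> R) a c :
  incr_convex G -> 0 <= a -> 0 <= c -> (forall u, 0 <= V u) -> nondec_on I V ->
  nondec_on I (fun u => G (a + c + V u) - G (a + V u)).
Proof.
move=> G_ic a0 c0 V0 V_nondec u v uv.
have Vuv : 0 <= V v - V u by rewrite subr_ge0 V_nondec.
have := G_ic (a + V u) c (V v - V u) (addr_ge0 a0 (V0 u)) c0 Vuv.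
rewrite !(addrAC a (V u) c) -!addrA !subrKC.
lra.
Qed.

(* Peel off the coordinates of T one at a time: conditioning the increment of G at X_i on the
   remaining coordinates gives a nondecreasing function of them, to which negative correlation
   applies. *)
Lemma Ex_le_Ebern mu D y (c : 'I_n -> R) (G : R -> R) (T : seq 'I_n) a :
  coord_neg_correlated mu D y -> \sum_x mu x = 1 -> (forall i, 0 <= y i <= 1) ->
  incr_convex G -> (forall l, 0 <= c l) -> uniq T -> {subset T <= D} -> 0 <= a ->
  \sum_x mu x * G (a + \sum_(l <- T) c l * (x l)%:R) <= Ebern G [seq (y l, c l) | l <- T] a.
Proof.
move=> negc mu1 y01 G_ic c0; elim: T a => [|i T IH] a /=.
  by move=> _ _ a0; under eq_bigr do rewrite big_nil addr0; rewrite -big_distrl /= mu1 mul1r.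
case/andP=> iT uT TD a0.
have TD' : {subset T <= D} by move=> l lT; apply: TD; rewrite inE lT orbT.
have iD : i \in D by apply: TD; rewrite inE eqxx.
set V := fun u : 'I_n -> R => \sum_(l <- T) c l * Num.max (u l) 0.
have V0 u : 0 <= V u by rewrite /V big_seq sumr_ge0 // => l _; rewrite mulr_ge0 // le_max lexx orbT.
have V_nondec : nondec_on [set l in T] V.
  move=> u v uv; rewrite /V !big_seq; apply: ler_sum => l lT.
  by rewrite ler_wpM2l // le_max2 // uv // inE.
have Vind x : V (ind R x) = \sum_(l <- T) c l * (x l)%:R.
  by apply: eq_bigr => l _; rewrite /ind max_l.
set E := fun s : R => \sum_x mu x * G (s + \sum_(l <- T) c l * (x l)%:R).
have := negc i [set l in T] _ iD _ _
  (nondec_on_increment G_ic a0 (c0 i) V0 V_nondec).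
rewrite inE iT => /(_ _ isT); rewrite (_ : _ \subset D); last first.
  by apply/fintype.subsetP => l; rewrite inE => /TD'.
move=> /(_ isT).
have -> : \sum_x mu x * ((x i)%:R * (G (a + c i + V (ind R x)) - G (a + V (ind R x))))
    = \sum_x mu x * G (a + \sum_(l <- i :: T) c l * (x l)%:R) - E a.
  rewrite -sumrB; apply: eq_bigr => x _; rewrite big_cons Vind.
  by case: (x i); rewrite /= ?mulr1 ?mulr0 ?mul1r ?mul0r ?add0r ?addrA; ring.
have -> : \sum_x mu x * (G (a + c i + V (ind R x)) - G (a + V (ind R x))) = E (a + c i) - E a.
  by rewrite -sumrB; apply: eq_bigr => x _; rewrite Vind; ring.
have H1 := IH a uT TD' a0.
have H2 := IH (a + c i) uT TD' (addr_ge0 a0 (c0 i)).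
have /andP[y0 y1] := y01 i.
have := ler_wpM2l y0 H2; have := ler_wpM2l (_ : 0 <= 1 - y i) H1.
rewrite /E; nra.
Qed.

End Dependence.

Section ConfigurationLP.
Variables (R : realType) (F : R -> R).
Hypotheses (F_nnc : nonneg_nondec_convex F) (F_pos : forall t, 0 < t -> 0 < F t).

Let F0 : forall t, 0 <= t -> 0 <= F t. Proof. by case: F_nnc. Qed.
Let F_nondec : forall s t, 0 <= s -> s <= t -> F s <= F t. Proof. by case: F_nnc => _ []. Qed.
Let F_convex : convex_nonneg F. Proof. by case: F_nnc => _ []. Qed.
Let F_ic : incr_convex F. Proof. exact: convex_incr_convex. Qed.

Local Open Scope ereal_scope.

(* Bernoulli(1) is dominated by Poisson(1) for the convex function j |-> F j / F 1. *)
Lemma Aconst_ge1 : 1 <= Aconst F.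
Proof.
have F1 : (0 < F 1)%R := F_pos ltr01.
apply: (@le_trans _ _ (\sum_(m <oo) (poisson_pmf 1 m * (F (1 * m%:R) / F 1))%:E)); last first.
  by apply: ereal_sup_ubound; exists 1%R => //=; rewrite ltr01.
under eq_eseriesr do rewrite poisson_pmf1E mul1r.
have := @bernoulli_le_poisson R 1 (fun j => F j%:R / F 1)%R ler01.
rewrite subrr mul0r add0r mul1r mulr1n divff ?gt_eqF //; apply.
- by move=> j; rewrite divr_ge0 ?F0 // ltW.
- by rewrite ler_pdivrMr // mul1r F_nondec.
- move=> j; rewrite (_ : 1 - _ = (F 1 - F 0%:R) / F 1)%R; last by field; rewrite gt_eqF.
  rewrite -!mulrBl ler_pM2r ?invr_gt0 //.
  have := F_ic (lexx 0%R) ler01 (ler0n _ j).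
  by rewrite !add0r -natr1 [(1 + _)%R]addrC; lra.
Qed.

Lemma poisson_Ex_le_Aconst t : (0 <= t)%R ->
  \sum_(m <oo) (poisson_pmf 1 m * F (t * m%:R))%:E <= Aconst F * (F t)%:E.
Proof.
move=> t0; have [->|tn0] := eqVneq t 0%R.
  under eq_eseriesr do rewrite mul0r poisson_pmf1E EFinM muleC.
  rewrite nneseriesZl => [|i _]; last by rewrite lee_fin poisson_mass_ge0.
  rewrite poisson_mass_sum ?ler01 // mule1 -[X in X <= _]mul1e.
  by rewrite lee_wpmul2r ?lee_fin ?F0 ?Aconst_ge1.
have Ft : (0 < F t)%R by rewrite F_pos // lt_def tn0.
rewrite muleC (_ : \sum_(m <oo) _ =
    (F t)%:E * \sum_(m <oo) (poisson_pmf 1 m * (F (t * m%:R) / F t))%:E); last first.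
  rewrite -nneseriesZl => [|m _]; last first.
    by rewrite lee_fin mulr_ge0 ?poisson_pmf_ge0 // divr_ge0 ?F0 ?mulr_ge0 // ltW.
  by apply: eq_eseriesr => m _; rewrite -EFinM; congr (_%:E); field; rewrite gt_eqF.
apply: lee_wpmul2l; first by rewrite lee_fin ltW.
by apply: ereal_sup_ubound; exists t => //=; rewrite lt_def tn0.
Qed.

(* Independent configurations with total probability 1 cost at most A(F) times their
   fractional cost: pass to the compound Poisson process, where m draws of a configuration
   are bounded by Jensen. *)
Lemma Ebern_le_Aconst l : all bern_term l -> rate l = 1%R ->
  (Ebern F l 0)%:E <= Aconst F * (\sum_(pc <- l) pc.1 * F pc.2)%:E.
Proof.
move=> okl l1.
have okpc pc : pc \in l -> (0 <= pc.1)%R /\ (0 <= pc.2)%R.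
  by case: pc => p c /(allP okl) /bern_termP[].
apply: le_trans (Ebern_le_Ecpoisson F0 F_nondec F_ic okl (lexx 0%R)) _.
apply: (@le_trans _ _ (\sum_(m <oo)
    (poisson_pmf 1 m * \sum_(pc <- l) pc.1 * F (pc.2 * m%:R))%:E)).
  apply: lee_nneseries => [m _ _|m _].
    by rewrite lee_fin mulr_ge0 ?poisson_weight_ge0 ?draws_ge0.
  rewrite lee_fin poisson_pmf1E (_ : poisson_weight l m = poisson_mass 1 m); last first.
    by rewrite /poisson_weight /poisson_mass l1 expr1n div1r mulrC.
  rewrite ler_wpM2l ?poisson_mass_ge0 //.
  apply: le_trans (draws_le_convex m F_convex okl l1 (lexx 0%R)) _.
  by rewrite !big_seq; apply: ler_sum => pc _; rewrite add0r (mulrC m%:R).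
under eq_eseriesr do rewrite big_distrr /= big_seq -sumEFin.
rewrite nneseries_sum => [|pc m /okpc[p0 c0]]; last first.
  by rewrite lee_fin mulr_ge0 ?poisson_pmf_ge0 // mulr_ge0 // F0 // mulr_ge0.
rewrite big_seq -sumEFin ge0_sume_distrr => [|pc /okpc[p0 c0]]; last first.
  by rewrite lee_fin mulr_ge0 ?F0.
apply: lee_sum => pc /okpc[p0 c0].
under eq_eseriesr do rewrite mulrCA EFinM.
rewrite nneseriesZl => [|m _]; last by rewrite lee_fin mulr_ge0 ?poisson_pmf_ge0 ?F0 ?mulr_ge0.
by rewrite EFinM muleCA lee_wpmul2l ?lee_fin // poisson_Ex_le_Aconst.
Qed.

Local Close Scope ereal_scope.

Lemma Ex_cost_le_Aconst_lp_cost n (d : 'I_n -> R) (mu : {ffun 'I_n -> bool} -> R)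
    (y : 'I_n -> R) (z : {set 'I_n} -> R) :
  (forall i, 0 <= d i) -> (forall i, 0 <= y i <= 1) ->
  is_pmf mu -> (forall i, prob1 mu i = y i) ->
  let D := finset (fun i => d i != 0) in indep_on mu D \/ neg_assoc_on mu D ->
  (forall S, 0 <= z S) -> \sum_S z S = 1 -> (forall i, \sum_(S : {set 'I_n} | i \in S) z S = y i) ->
  ((\sum_x mu x * F (\sum_i d i * (x i)%:R))%:E <=
    Aconst F * (\sum_(S : {set 'I_n}) F (\sum_(i in S) d i) * z S)%:E)%E.
Proof.
move=> d0 y01 pm py D indD z0 z1 zy.
have negc : coord_neg_correlated mu D y.
  case: indD => [/indep_coord_neg_correlated|/neg_assoc_coord_neg_correlated]; exact.
set T := enum D; set ss := index_enum {set 'I_n}.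
have sum_D (g : 'I_n -> R) : (forall i, d i = 0 -> g i = 0) -> \sum_i g i = \sum_(l <- T) g l.
  move=> gD; rewrite /T big_enum /= [RHS]big_mkcond /=; apply: eq_bigr => i _.
  by case: ifPn => // /[!inE] /negbNE /eqP /gD.
have z01 X : 0 <= z X <= 1.
  by rewrite z0 /= -z1 (bigD1 X) //= lerDl sumr_ge0.
have cover_y i : \sum_(X <- ss) (if i \in X then z X else 0) = y i by rewrite -zy [RHS]big_mkcond.
set configs := [seq (z X, \sum_(i <- T | i \in X) d i) | X <- ss].
have configs_ok : all bern_term configs.
  apply/allP => _ /mapP[X _ ->]; apply/bern_termP; split; try by case/andP: (z01 X).
  by rewrite big_seq_cond sumr_ge0.
apply: (@le_trans _ _ (Ebern F configs 0)%:E).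
  rewrite lee_fin; apply: (@le_trans _ _ (Ebern F [seq (y l, d l) | l <- T] 0)).
    have TD : {subset T <= D} by move=> l; rewrite mem_enum.
    have dx x : \sum_i d i * (x i)%:R = 0 + \sum_(l <- T) d l * (x l)%:R.
      by rewrite add0r sum_D // => i ->; rewrite mul0r.
    under eq_bigr do rewrite dx.
    exact: Ex_le_Ebern negc pm.2 y01 F_ic d0 (enum_uniq _) TD (lexx 0).
  have cover1 i : \sum_(X <- ss) (if i \in X then z X else 0) <= 1.
    by rewrite cover_y; case/andP: (y01 i).
  have := Ebern_items_le_configs F_ic z01 d0 T (lexx 0) cover1.
  by under eq_map do rewrite cover_y.
apply: le_trans (Ebern_le_Aconst configs_ok _) _.
  by rewrite /rate big_map.
rewrite /configs big_map; apply: lee_wpmul2l; first exact: le_trans (lee01) Aconst_ge1.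
rewrite lee_fin le_eqVlt; apply/orP; left; apply/eqP; apply: eq_bigr => X _ /=.
rewrite mulrC; congr (F _ * _); rewrite big_mkcond [RHS]big_mkcond /=.
by apply/esym/sum_D => i ->; case: ifP.
Qed.

End ConfigurationLP.

Section Rounding.
Variables (R : realType) (n k : nat) (f : 'I_k -> R -> R) (d : 'I_n -> 'I_k -> R).
Hypotheses (f_nnc : forall j, nonneg_nondec_convex (f j)) (d0 : forall i j, 0 <= d i j).

Lemma lp_cost_ge0 (z : 'I_k -> {set 'I_n} -> R) j :
  (forall S, 0 <= z j S) -> 0 <= lp_cost f d z j.
Proof.
move=> z0; apply: sumr_ge0 => S _; case: (f_nnc j) => f0 _.
by rewrite mulr_ge0 // f0 // sumr_ge0.
Qed.

Lemma Ex_ip_obj_le (mu : {ffun 'I_n -> bool} -> R) (P : set ('I_n -> R)) y z :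
  (forall j t, 0 < t -> 0 < f j t) -> (forall i, 0 <= y i <= 1) ->
  is_pmf mu -> (forall i, prob1 mu i = y i) ->
  (forall j, let D := finset (fun i => d i j != 0) in indep_on mu D \/ neg_assoc_on mu D) ->
  lp_feasible P y z ->
  ((Ex mu (ip_obj f d))%:E <= \sum_(j < k) (Aconst (f j) * (lp_cost f d z j)%:E))%E.
Proof.
move=> f_pos y01 pm py indD [_ [z1 [zy z0]]].
rewrite /Ex /ip_obj; under eq_bigr do rewrite big_distrr.
rewrite exchange_big /= -sumEFin; apply: lee_sum => j _.
exact (Ex_cost_le_Aconst_lp_cost (f_nnc j) (f_pos j) (d0^~ j) y01 pm py (indD j)
  (z0 j) (z1 j) (zy^~ j)).
Qed.

(* A 0/1 point x of P is the LP solution putting each z_j on the single set {i | x i}. *)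
Lemma LPval_le_IPval (P : set ('I_n -> R)) : (LPval P f d <= IPval P f d)%E.
Proof.
apply/ereal_infP => _ [x Px <-]; set X := [set i | x i]%SET.
pose z (j : 'I_k) (S : {set 'I_n}) := ((S == X)%:R : R).
have sum_z (g : {set 'I_n} -> R) : \sum_S g S * (S == X)%:R = g X.
  by rewrite (bigD1 X) //= eqxx mulr1 big1 ?addr0 // => S /negbTE ->; rewrite mulr0.
have obj_eq : lp_obj f d z = ip_obj f d (ind R x).
  rewrite /lp_obj /ip_obj; apply: eq_bigr => j _; rewrite /lp_cost /z sum_z.
  congr (f j _); rewrite big_mkcond; apply: eq_bigr => i _.
  by rewrite inE /ind; case: (x i); rewrite ?mulr1 ?mulr0.
apply: ge_ereal_inf; exists (lp_obj f d z)%:E; last by rewrite obj_eq.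
exists (ind R x, z) => //=; split => //; split; [|split].
- move=> j; rewrite (eq_bigr (fun S : {set 'I_n} => 1 * (S == X)%:R)) ?sum_z // => S _.
  by rewrite mul1r.
- move=> i j; rewrite big_mkcond (eq_bigr (fun S : {set 'I_n} => (i \in S)%:R * (S == X)%:R)).
    by rewrite sum_z inE /ind.
  by move=> S _; rewrite /z; case: ifP; rewrite ?mul1r ?mul0r.
- by move=> j S; rewrite /z ler0n.
Qed.


End Rounding.

Theorem theorem4 (R : realType) (n k m : nat)
  (f : 'I_k -> R -> R) (d : 'I_n -> 'I_k -> R)
  (a : 'I_m -> 'I_n -> R) (b : 'I_m -> R)
  (Rnd : ('I_n -> R) -> {ffun 'I_n -> bool} -> R) :
  (forall j, nonneg_nondec_convex (f j)) ->
  (forall j t, 0 < t -> 0 < f j t) ->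
  (forall i j, 0 <= d i j) ->
  (forall y, polytope a b y -> forall i, 0 <= y i <= 1) ->
  (forall y, polytope a b y ->
     [/\ is_pmf (Rnd y),
         (forall x, 0 < Rnd y x -> polytope a b (ind R x)),
         (forall i, prob1 (Rnd y) i = y i) &
         (forall j, let D := finset (fun i => d i j != 0) in
            indep_on (Rnd y) D \/ neg_assoc_on (Rnd y) D)]) ->
  (forall y z, lp_feasible (polytope a b) y z ->
     ((Ex (Rnd y) (ip_obj f d))%:E <=
        \sum_(j < k) (Aconst (f j) * (lp_cost f d z j)%:E))%E) /\
  (forall (eps : R) y z, 0 <= eps -> lp_feasible (polytope a b) y z ->
     ((lp_obj f d z)%:E <= (1 + eps)%:E * LPval (polytope a b) f d)%E ->
     ((Ex (Rnd y) (ip_obj f d))%:E <=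
        (1 + eps)%:E * (\big[Order.max/0%E]_(j < k) Aconst (f j))
          * IPval (polytope a b) f d)%E).
Proof.
move=> f_nnc f_pos d0 y01 Rnd_ok.
have approx y z : lp_feasible (polytope a b) y z ->
    ((Ex (Rnd y) (ip_obj f d))%:E <= \sum_(j < k) (Aconst (f j) * (lp_cost f d z j)%:E))%E.
  move=> yz; have [pm _ py indD] := Rnd_ok y yz.1.
  exact: (Ex_ip_obj_le f_nnc d0 f_pos (y01 y yz.1) pm py indD yz).
split=> // eps y z eps0 yz near_opt.
set Amax := \big[Order.max/0%E]_(j < k) Aconst (f j).
have cost0 j : 0 <= lp_cost f d z j by apply: lp_cost_ge0 => //; case: yz => _ [_ [_]].
apply: le_trans (approx y z yz) _.
apply: (@le_trans _ _ (Amax * (lp_obj f d z)%:E)%E).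
  rewrite /lp_obj -sumEFin ge0_sume_distrr => [|j _]; last by rewrite lee_fin.
  by apply: lee_sum => j _; rewrite lee_wpmul2r ?lee_fin // le_bigmax.
have Amax0 : (0 <= Amax)%E by exact: bigmax_ge_id.
rewrite [(_ * Amax)%E]muleC -muleA lee_wpmul2l // (le_trans near_opt) //.
by rewrite lee_wpmul2l ?lee_fin ?addr_ge0 // LPval_le_IPval.
Qed.
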